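(* Let $F$ be a local function of range $R$ satisfying conditions (i)–(iv) of the context with associated $\theta$, let $\Sigma\subseteq(0,\infty)$ be non-empty finite, $\kappa\in(0,1)$, $\mu\ge0$, $L\ge1$, $K\ge100$ integers, $z\in\mathbb L$ and $B=B_z$. Then for every $u>0$ and $\alpha\in\Sigma$: if $B$ is $(\Sigma,\kappa,\mu)$-good and $N_u(B)/\mathrm{cap}(B)\le\alpha$, then $\langle\bar e_B,L^u\rangle$ and $\langle m_B,L^u\rangle$ are smaller than $(1+\kappa)\alpha$ and $\frac1{|B|}\sum_{x\in B_R}F((L^u_{x+y})_{|y|_\infty\le R})<\theta((1+\kappa)\alpha)+\mu$; and if $B$ is $(\Sigma,\kappa,\mu)$-good and $N_u(B)/\mathrm{cap}(B)\ge\alpha$, then $\langle\bar e_B,L^u\rangle$ and $\langle m_B,L^u\rangle$ are bigger than $(1-\kappa)\alpha$ and $\frac1{|B|}\sum_{x\in B}F((L^u_{x+y})_{|y|_\infty\le R})>\theta((1-\kappa)\alpha)-\mu$. Moreover, if for each $\alpha\in\Sigma$ one has $\Sigma\cap((1-\kappa)\alpha,(1+\kappa)\alpha)=\{\alpha\}$, then whenever $B$ is $(\Sigma,\kappa,\mu)$-good, for all $u>0$ at most two elements of $\Sigma$ lie (in the wide sense) between any pair of values among $N_u(B)/\mathrm{cap}(B)$, $\langle\bar e_B,L^u\rangle$, $\langle m_B,L^u\rangle$.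
   Context: $d\ge3$. Random interlacements on $\mathbb Z^d$ (governed by $\mathbb P$) are a Poisson cloud of labelled doubly-infinite continuous-time simple random walk trajectories; $L^u_x$ is the total time spent at $x$ by trajectories with label at most $u$. $B(x,r)$ is the closed sup-norm ball. Local function: an integer $R\ge0$ and $F:[0,\infty)^{B(0,R)}\to[0,\infty)$ with (i) $F$ measurable and non-decreasing in each variable; (ii) $F(0)=0$; (iii) there is $c(F)$ with $F(\ell+\ell')\le F(\ell)+c(F)(1\{\ell'\ne0\}+\sum_{|x|_\infty\le R}\ell'_x)$; (iv) $\theta(u)=\mathbb E[F((L^u_y)_{|y|_\infty\le R})]$ is continuous in $u\ge0$. $F_0$ denotes the local function $F_0(\ell)=\ell$ with $R=0$ (so $\theta(u)=u$). Boxes: $\mathbb L=L\mathbb Z^d$; for $z\in\mathbb L$, $B_z=z+[0,L)^d$ and $U_z=z+[-KL+1,KL-1)^d$ (intersected with $\mathbb Z^d$). For $B=B_z$, $U=U_z$: $N_u(B)$ is the total number of excursions from $B$ to the outer boundary $\partial U$ in all interlacement trajectories with label $\le u$; $Z^B_\ell$, $\ell\ge1$, are the successive such excursions in the interlacement trajectories (ordered by label, then in time); $L^B_{a,x}=\sum_{1\le\ell\le a}\int_0^{T_U(Z^B_\ell)}1\{Z^B_\ell(s)=x\}ds$ ($T_U$ the exit time from $U$); $F^B_{a,x}=F((L^B_{a,x+y})_{|y|_\infty\le R})$, $F^B_a=\sum_{x\in B}F^B_{a,x}$; $\langle\rho,L^B_a\rangle=\sum_x\rho(x)L^B_{a,x}$.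 $e_B$ is the equilibrium measure of $B$, $\mathrm{cap}(B)$ its total mass, $\bar e_B=e_B/\mathrm{cap}(B)$, $m_B$ the normalized counting measure on $B$, $\langle\rho,L^u\rangle=\sum_x\rho(x)L^u_x$, $B_R=\{x\in B:B(x,R)\subseteq B\}$. Bad events: $\mathcal B^{B,F}_{\alpha,\kappa,\mu}=\{\langle\bar e_B,L^B_{\alpha\mathrm{cap}(B)}\rangle\notin(\alpha(1-\kappa),\alpha(1+\kappa))\}\cup\{\frac1{|B|}F^B_{\alpha\mathrm{cap}(B)}\notin(\theta(\alpha(1-\kappa))-\mu,\theta(\alpha(1+\kappa))+\mu)\}$, and $\mathcal B^{B,F}_{\Sigma,\kappa,\mu}=\bigcup_{\alpha\in\Sigma}(\mathcal B^{B,F}_{\alpha,\kappa,\mu}\cup\mathcal B^{B,F_0}_{\alpha,\kappa,0})$. $B$ is $(\Sigma,\kappa,\mu)$-bad if this event occurs, $(\Sigma,\kappa,\mu)$-good otherwise. *)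

From Stdlib Require Import Reals Lra Lia ZArith List Classical ClassicalEpsilon.
Open Scope R_scope.

Definition indic (P : Prop) : R :=
  if excluded_middle_informative P then 1 else 0.

(* supremum of a sequence (0 if unbounded; only used on bounded sequences) *)
Definition sup_seq (u : nat -> R) : R :=
  match excluded_middle_informative (bound (fun r => exists n, r = u n)) with
  | left Hb =>
      proj1_sig (completeness (fun r => exists n, r = u n) Hb
                   (ex_intro _ (u 0%nat) (ex_intro _ 0%nat eq_refl)))
  | right _ => 0
  end.

Definition inf_seq (u : nat -> R) : R := - sup_seq (fun n => - u n).

Definition nnsum (f : nat -> R) : R := sup_seq (fun n => sum_f_R0 f n).

Definition zsum (f : Z -> R) : R :=
  nnsum (fun t => f (Z.of_nat t)) + nnsum (fun t => f (- Z.of_nat (S t))%Z).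

(* a point of Z^d: coordinates 0..d-1; coordinates >= d are 0 (see valid) *)
Definition pt := nat -> Z.

Definition valid (d : nat) (x : pt) : Prop := forall k, (d <= k)%nat -> x k = 0%Z.

Definition origin : pt := fun _ => 0%Z.
Definition padd (x y : pt) : pt := fun k => (x k + y k)%Z.
Definition unitv (k : nat) (s : Z) : pt := fun j => if Nat.eqb j k then s else 0%Z.

Definition in_rect (d : nat) (a : pt) (lo hi : Z) (x : pt) : Prop :=
  valid d x /\ forall k, (k < d)%nat -> (a k + lo <= x k < a k + hi)%Z.

Definition zrange (lo hi : Z) : list Z :=
  map (fun n => (lo + Z.of_nat n)%Z) (seq 0 (Z.to_nat (hi - lo))).

Fixpoint rect_list (d : nat) (a : pt) (lo hi : Z) : list pt :=
  match d with
  | O => origin :: nil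
  | S k => flat_map (fun p => map (fun t => fun j => if Nat.eqb j k then (a k + t)%Z else p j)
                                   (zrange lo hi))
                    (rect_list k a lo hi)
  end.

Definition lsum (l : list pt) (f : pt -> R) : R :=
  fold_right (fun p acc => f p + acc) 0 l.

Definition ball (d : nat) (x : pt) (Rr : nat) : pt -> Prop :=
  in_rect d x (- Z.of_nat Rr) (Z.of_nat Rr + 1).
Definition ball_list (d : nat) (x : pt) (Rr : nat) : list pt :=
  rect_list d x (- Z.of_nat Rr) (Z.of_nat Rr + 1).

Definition adj (d : nat) (x y : pt) : Prop :=
  exists k, (k < d)%nat /\ exists s, (s = 1%Z \/ s = (-1)%Z) /\ y = padd x (unitv k s).

Definition in_lattice (d L : nat) (z : pt) : Prop :=
  valid d z /\ forall k, (k < d)%nat -> (Z.of_nat L | z k)%Z.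

Definition Bset (d L : nat) (z : pt) : pt -> Prop := in_rect d z 0 (Z.of_nat L).
Definition Blist (d L : nat) (z : pt) : list pt := rect_list d z 0 (Z.of_nat L).
Definition Uset (d L K : nat) (z : pt) : pt -> Prop :=
  in_rect d z (- Z.of_nat (K * L) + 1) (Z.of_nat (K * L) - 1).
Definition Bsize (d L : nat) : R := INR (L ^ d).

Definition nbr_sum (d : nat) (g : pt -> R) (y : pt) : R :=
  fold_right (fun k acc => g (padd y (unitv k 1)) + g (padd y (unitv k (-1))) + acc)
             0 (seq 0 d).

(* avoid d B n y = P_y[ X_1, ..., X_n all outside B ] for discrete SRW *)
Fixpoint avoid (d : nat) (B : pt -> Prop) (n : nat) (y : pt) : R :=
  match n with
  | O => 1
  | S n' => / INR (2 * d) * nbr_sum d (fun w => indic (~ B w) * avoid d B n' w) y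
  end.

(* e_B(x) = 1_B(x) P_x[ tilde H_B = infinity ] *)
Definition eqm (d : nat) (B : pt -> Prop) (x : pt) : R :=
  indic (B x) * inf_seq (fun n => avoid d B (S n) x).

Definition capB (d L : nat) (z : pt) : R := lsum (Blist d L z) (eqm d (Bset d L z)).
Definition ebar (d L : nat) (z : pt) (x : pt) : R := eqm d (Bset d L z) x / capB d L z.

(* countably many labelled doubly-infinite continuous-time nearest-neighbour
   trajectories: skeleton traj i : Z -> Z^d, holding times hold i, label lab i *)
Record config := { traj : nat -> Z -> pt; hold : nat -> Z -> R; lab : nat -> R }.

(* almost-sure properties of a realisation of random interlacements *)
Definition interlacement_like (d : nat) (w : config) : Prop :=
  (forall i n, valid d (traj w i n)) /\
  (forall i n, adj d (traj w i n) (traj w i (n + 1)%Z)) /\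
  (forall i n, 0 < hold w i n) /\
  (forall i, 0 <= lab w i) /\
  (forall i j, lab w i = lab w j -> i = j) /\
  (forall i (r : nat), exists N : Z, forall n, (N <= Z.abs n)%Z -> ~ ball d origin r (traj w i n)) /\
  (forall u (r : nat), exists N : nat, forall i, (N <= i)%nat -> lab w i <= u ->
       forall n, ~ ball d origin r (traj w i n)).

Section Local.
Variables (B U : pt -> Prop) (w : config).

Definition exc_start (i : nat) (n : Z) : Prop :=
  B (traj w i n) /\
  exists m, (m < n)%Z /\ ~ U (traj w i m) /\
            forall k, (m < k < n)%Z -> ~ B (traj w i k).

Definition exc_time (i : nat) (n : Z) (x : pt) : R :=
  nnsum (fun t => indic (forall j, (j <= t)%nat -> U (traj w i (n + Z.of_nat j)%Z))
                  * hold w i (n + Z.of_nat t)%Z * indic (traj w i (n + Z.of_nat t)%Z = x)).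

(* index ell of that excursion in the ordering (by label, then time) *)
Definition exc_rank (i : nat) (n : Z) : R :=
  nnsum (fun j => zsum (fun m =>
     indic (exc_start j m /\ (lab w j < lab w i \/ (j = i /\ (m <= n)%Z))))).

Definition LB (a : R) (x : pt) : R :=
  nnsum (fun i => zsum (fun n => indic (exc_start i n /\ exc_rank i n <= a) * exc_time i n x)).

Definition Nu (u : R) : R :=
  nnsum (fun i => indic (lab w i <= u) * zsum (fun n => indic (exc_start i n))).

End Local.

Definition Lu (w : config) (u : R) (x : pt) : R :=
  nnsum (fun i => indic (lab w i <= u) *
                  zsum (fun n => hold w i n * indic (traj w i n = x))).

(* F : [0,oo)^{B(0,R)} -> [0,oo), represented as a function of pt -> R that only
   depends on the values on B(0,R); conditions (i)-(iii) (measurability is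
   vacuous/omitted, condition (iv) concerns theta) *)
Definition local_function (d Rr : nat) (F : (pt -> R) -> R) (c : R) : Prop :=
  let Bl := ball d origin Rr in
  (forall f g, (forall y, Bl y -> f y = g y) -> F f = F g) /\
  (forall f, (forall y, Bl y -> 0 <= f y) -> 0 <= F f) /\
  (forall f g, (forall y, Bl y -> 0 <= f y <= g y) -> F f <= F g) /\
  F (fun _ => 0) = 0 /\
  (forall f g, (forall y, Bl y -> 0 <= f y) -> (forall y, Bl y -> 0 <= g y) ->
     F (fun y => f y + g y) <=
     F f + c * (indic (exists y, Bl y /\ g y <> 0) + lsum (ball_list d origin Rr) g)).

(* F_0(l) = l_0, R = 0, theta_0(u) = u *)
Definition F0 (l : pt -> R) : R := l origin.

Definition bad_event (d L K : nat) (z : pt) (w : config)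
   (F : (pt -> R) -> R) (theta : R -> R) (alpha kappa mu : R) : Prop :=
  let B := Bset d L z in
  let U := Uset d L K z in
  let a := alpha * capB d L z in
  ~ (alpha * (1 - kappa) < lsum (Blist d L z) (fun x => ebar d L z x * LB B U w a x)
       < alpha * (1 + kappa)) \/
  ~ (theta (alpha * (1 - kappa)) - mu <
       / Bsize d L * lsum (Blist d L z) (fun x => F (fun y => LB B U w a (padd x y)))
       < theta (alpha * (1 + kappa)) + mu).

Definition bad_box (d L K : nat) (z : pt) (w : config)
   (F : (pt -> R) -> R) (theta : R -> R) (Sig : list R) (kappa mu : R) : Prop :=
  exists alpha, In alpha Sig /\
    (bad_event d L K z w F theta alpha kappa mu \/
     bad_event d L K z w F0 (fun u => u) alpha kappa 0).

Definition good_box (d L K : nat) (z : pt) (w : config)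
   (F : (pt -> R) -> R) (theta : R -> R) (Sig : list R) (kappa mu : R) : Prop :=
  ~ bad_box d L K z w F theta Sig kappa mu.

Definition ebar_Lu (d L : nat) (z : pt) (w : config) (u : R) : R :=
  lsum (Blist d L z) (fun x => ebar d L z x * Lu w u x).
Definition mB_Lu (d L : nat) (z : pt) (w : config) (u : R) : R :=
  / Bsize d L * lsum (Blist d L z) (fun x => Lu w u x).

Definition in_BR (d L : nat) (z : pt) (Rr : nat) (x : pt) : Prop :=
  Bset d L z x /\ forall y, ball d x Rr y -> Bset d L z y.

(* The argument is pathwise.  Every visit of a trajectory to B
   lies in exactly one excursion from B to the outside of U, and excursions
   are ranked by (label, time).  Hence, if a <= N_u(B), the first a
   excursions belong to trajectories of label <= u, so L^B_{a,x} <= L^u_x;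
   and if N_u(B) <= a, every excursion of level u is among the first a, so
   L^u_x <= L^B_{a,x} on B.  With a = alpha cap(B), goodness of the box
   (averages of L^B_a against ebar_B, m_B and F close to alpha, theta(alpha))
   and monotonicity of F give the first part.  For the second part, each
   alpha in Sigma then lies up to the factor 1 +- kappa on one side of all
   three observables, so a third element of Sigma between two observables
   would be too close to the middle one, contradicting separation. *)
From Pilot Require Import Defs.
From Stdlib Require Import Reals List Lra Lia ZArith Classical ClassicalEpsilon FinFun FunctionalExtensionality.
Open Scope R_scope.

Lemma indic_true (P : Prop) : P -> indic P = 1.
Proof. intro H; unfold indic; destruct excluded_middle_informative; tauto. Qed.

Lemma indic_false (P : Prop) : ~ P -> indic P = 0.
Proof. intro H; unfold indic; destruct excluded_middle_informative; tauto. Qed.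

Lemma indic_range (P : Prop) : 0 <= indic P <= 1.
Proof. unfold indic; destruct excluded_middle_informative; lra. Qed.

Lemma indic_mono (P Q : Prop) : (P -> Q) -> indic P <= indic Q.
Proof. intro H; unfold indic; do 2 destruct excluded_middle_informative; try lra; tauto. Qed.

Lemma indic_neq0 (P : Prop) : indic P <> 0 -> P.
Proof. unfold indic; destruct excluded_middle_informative; tauto || lra. Qed.

Definition lsumA {A} (l : list A) (f : A -> R) : R := fold_right (fun a acc => f a + acc) 0 l.

Lemma lsumA_app {A} (l1 l2 : list A) f : lsumA (l1 ++ l2) f = lsumA l1 f + lsumA l2 f.
Proof. induction l1; simpl; [lra|]. rewrite IHl1; lra. Qed.

Lemma lsumA_map {A B} (h : A -> B) l f : lsumA (map h l) f = lsumA l (fun a => f (h a)).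
Proof. induction l; simpl; auto. rewrite IHl; auto. Qed.

Lemma lsumA_ext {A} (l : list A) f g : (forall a, In a l -> f a = g a) -> lsumA l f = lsumA l g.
Proof. induction l; simpl; intros; auto. rewrite H, IHl; auto. Qed.

Lemma lsumA_le {A} (l : list A) f g : (forall a, In a l -> f a <= g a) -> lsumA l f <= lsumA l g.
Proof.
  induction l; simpl; intros H; [lra|].
  assert (f a <= g a) by auto. assert (lsumA l f <= lsumA l g) by auto. lra.
Qed.

Lemma lsumA_nonneg {A} (l : list A) f : (forall a, In a l -> 0 <= f a) -> 0 <= lsumA l f.
Proof.
  induction l; simpl; intros H; [lra|].
  assert (0 <= f a) by auto. assert (0 <= lsumA l f) by auto. lra.
Qed.

Lemma lsumA_zero {A} (l : list A) f : (forall a, In a l -> f a = 0) -> lsumA l f = 0.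
Proof. induction l; simpl; intro H; auto. rewrite H, IHl; auto; lra. Qed.

Lemma lsumA_scal {A} (l : list A) c f : lsumA l (fun a => c * f a) = c * lsumA l f.
Proof. induction l; simpl; [lra|]. rewrite IHl; lra. Qed.

Lemma lsumA_ones {A} (l : list A) : lsumA l (fun _ => 1) = INR (length l).
Proof. induction l; simpl; [lra|]. rewrite IHl. destruct (length l); simpl; lra. Qed.

Lemma lsumA_prod {A B} (l1 : list A) (l2 : list B) f :
  lsumA (list_prod l1 l2) f = lsumA l1 (fun a => lsumA l2 (fun b => f (a, b))).
Proof.
  induction l1; simpl; auto. rewrite lsumA_app, IHl1, lsumA_map. reflexivity.
Qed.

Lemma lsumA_ge_term {A} (l : list A) f a :
  (forall a, In a l -> 0 <= f a) -> In a l -> f a <= lsumA l f.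
Proof.
  induction l; simpl; intros H Ha; [tauto|]. destruct Ha as [->|Ha].
  - assert (0 <= lsumA l f) by (apply lsumA_nonneg; auto). lra.
  - assert (f a <= lsumA l f) by auto. assert (0 <= f a0) by auto. lra.
Qed.

Lemma lsumA_remove {A} (dec : forall x y : A, {x = y} + {x <> y}) (l : list A) f b :
  NoDup l -> In b l -> lsumA l f = f b + lsumA (remove dec b l) f.
Proof.
  induction l; simpl; intros ND Hb; [tauto|]. inversion ND; subst.
  destruct (dec b a) as [->|ne].
  - rewrite notin_remove; auto.
  - destruct Hb as [->|Hb]; [congruence|]. simpl. rewrite IHl; auto. lra.
Qed.

Lemma NoDup_list_prod {A B} (l1 : list A) (l2 : list B) :
  NoDup l1 -> NoDup l2 -> NoDup (list_prod l1 l2).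
Proof.
  induction 1; simpl; intros; [constructor|].
  apply NoDup_app; auto.
  - apply Injective_map_NoDup; auto. intros b1 b2 E; inversion E; auto.
  - intros [a b] H2 H3. apply in_map_iff in H2. destruct H2 as [b' [E _]]. inversion E; subst.
    apply in_prod_iff in H3. tauto.
Qed.

Lemma NoDup_remove_all {A} (dec : forall x y : A, {x = y} + {x <> y}) b (l : list A) :
  NoDup l -> NoDup (remove dec b l).
Proof.
  induction 1; simpl; [constructor|]. destruct (dec b x); auto. constructor; auto.
  intro Hi. apply in_remove in Hi. tauto.
Qed.

(* This is the counting device behind both comparison
   inequalities of the paper. *)
Lemma lsumA_le_inj {A B} (dec : forall x y : B, {x = y} + {x <> y})
  (l1 : list A) (l2 : list B) (f : A -> R) (g : B -> R) (Rel : A -> B -> Prop) :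
  NoDup l1 -> NoDup l2 -> (forall b, 0 <= g b) ->
  (forall a, In a l1 -> f a <= 0 \/ exists b, In b l2 /\ Rel a b /\ f a <= g b) ->
  (forall a1 a2 b, In a1 l1 -> In a2 l1 -> Rel a1 b -> Rel a2 b -> a1 = a2) ->
  lsumA l1 f <= lsumA l2 g.
Proof.
  intros ND1. revert l2.
  induction ND1 as [|a l1 Hn ND1 IH]; intros l2 ND2 Hg Hex Hinj; simpl.
  - apply lsumA_nonneg; auto.
  - destruct (Hex a (or_introl eq_refl)) as [Hle|[b [Hb [Rb Hfb]]]].
    + assert (lsumA l1 f <= lsumA l2 g); [|lra].
      apply IH; auto; [intros; apply Hex; simpl; auto|intros; eapply Hinj; simpl; eauto].
    + rewrite (lsumA_remove dec l2 g b ND2 Hb).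
      assert (lsumA l1 f <= lsumA (remove dec b l2) g); [|lra].
      apply IH; auto.
      * apply NoDup_remove_all; auto.
      * intros a' Ha'.
        destruct (Hex a' (or_intror Ha')) as [?|[b' [Hb' [Rb' Hfb']]]]; [left; auto|].
        right. exists b'. split; auto. apply in_in_remove; auto.
        intro E; subst b'. assert (a = a') by (eapply Hinj; simpl; eauto). subst; tauto.
      * intros; eapply Hinj; simpl; eauto.
Qed.

Lemma partial_sum_as_lsumA f N : sum_f_R0 f N = lsumA (seq 0 (S N)) f.
Proof.
  induction N; [simpl; lra|]. rewrite (seq_S (S N)), lsumA_app.
  change (sum_f_R0 f (S N)) with (sum_f_R0 f N + f (S N)). rewrite IHN. simpl. lra.
Qed.

Lemma partial_sum_mono f n m :
  (forall k, 0 <= f k) -> (n <= m)%nat -> sum_f_R0 f n <= sum_f_R0 f m.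
Proof. intros H Hnm. induction Hnm; [lra|]. simpl. specialize (H (S m)). lra. Qed.

Lemma partial_sum_stationary f N n :
  (forall k, (N < k)%nat -> f k = 0) -> (N <= n)%nat -> sum_f_R0 f n = sum_f_R0 f N.
Proof. intros H Hnm. induction Hnm; auto. simpl. rewrite H by lia. lra. Qed.

Lemma nnsum_nonneg f : (forall k, 0 <= f k) -> 0 <= nnsum f.
Proof.
  intro H. unfold nnsum, sup_seq. destruct excluded_middle_informative; [|lra].
  destruct completeness as [m [Hub Hlub]]. simpl.
  assert (sum_f_R0 f 0 <= m) by (apply Hub; exists 0%nat; auto). simpl in *.
  pose proof (H 0%nat). lra.
Qed.

Lemma nnsum_finite f N : (forall k, 0 <= f k) -> (forall k, (N < k)%nat -> f k = 0) ->
  nnsum f = lsumA (seq 0 (S N)) f.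
Proof.
  intros H0 HN. rewrite <- partial_sum_as_lsumA.
  assert (Hub : forall n, sum_f_R0 f n <= sum_f_R0 f N).
  { intro n. destruct (le_lt_dec n N).
    - apply partial_sum_mono; auto.
    - rewrite (partial_sum_stationary f N n); auto; lra || lia. }
  unfold nnsum, sup_seq. destruct excluded_middle_informative as [b|nb].
  - destruct completeness as [m [Hm1 Hm2]]. simpl. apply Rle_antisym.
    + apply Hm2. intros r [n ->]. auto.
    + apply Hm1. exists N; auto.
  - exfalso. apply nb. exists (sum_f_R0 f N). intros r [n ->]. auto.
Qed.

Lemma nnsum_zero f : (forall k, f k = 0) -> nnsum f = 0.
Proof. intro H. rewrite (nnsum_finite f 0); [apply lsumA_zero|..]; intros; rewrite H; lra. Qed.

Lemma nnsum_le f g N : (forall k, 0 <= f k <= g k) -> (forall k, (N < k)%nat -> g k = 0) ->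
  nnsum f <= nnsum g.
Proof.
  intros H HN. rewrite (nnsum_finite f N), (nnsum_finite g N).
  - apply lsumA_le; intros; apply H.
  - intro k; specialize (H k); lra.
  - auto.
  - intro k; specialize (H k); lra.
  - intros k Hk; specialize (H k); specialize (HN k Hk); lra.
Qed.

Lemma nnsum_le_gain f g N i0 c :
  (forall k, 0 <= f k <= g k) -> (forall k, (N < k)%nat -> g k = 0) ->
  f i0 + c <= g i0 -> nnsum f + c <= nnsum g.
Proof.
  intros H HN Hi. set (N' := Nat.max N i0).
  assert (Hg' : forall k, (N' < k)%nat -> g k = 0) by (intros; apply HN; lia).
  assert (Hf' : forall k, (N' < k)%nat -> f k = 0)
    by (intros k Hk; specialize (H k); specialize (Hg' k Hk); lra).
  rewrite (nnsum_finite f N'), (nnsum_finite g N'); auto; try (intro k; specialize (H k); lra).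
  assert (Hin : In i0 (seq 0 (S N'))) by (apply in_seq; lia).
  rewrite (lsumA_remove Nat.eq_dec _ f i0 (seq_NoDup _ _) Hin).
  rewrite (lsumA_remove Nat.eq_dec _ g i0 (seq_NoDup _ _) Hin).
  assert (lsumA (remove Nat.eq_dec i0 (seq 0 (S N'))) f
          <= lsumA (remove Nat.eq_dec i0 (seq 0 (S N'))) g) by (apply lsumA_le; intros; apply H).
  lra.
Qed.

Lemma lsumA_le_nnsum g N (l : list nat) :
  (forall k, 0 <= g k) -> (forall k, (N < k)%nat -> g k = 0) -> NoDup l -> lsumA l g <= nnsum g.
Proof.
  intros H HN ND. rewrite (nnsum_finite g N); auto.
  apply (lsumA_le_inj Nat.eq_dec l (seq 0 (S N)) g g eq); auto.
  - apply seq_NoDup.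
  - intros a Ha. destruct (le_lt_dec a N).
    + right. exists a. split; [apply in_seq; lia|]. split; auto; lra.
    + left. rewrite HN; auto; lra.
  - intros; subst; auto.
Qed.

(* The integers of absolute value at most M, listed without repetition
   (together with -(M+1)); sums over Z supported there are finite sums. *)
Definition zwindow (M : nat) : list Z :=
  map Z.of_nat (seq 0 (S M)) ++ map (fun t => (- Z.of_nat (S t))%Z) (seq 0 (S M)).

Lemma zwindow_NoDup M : NoDup (zwindow M).
Proof.
  unfold zwindow. apply NoDup_app.
  - apply Injective_map_NoDup; [intros a b; lia|apply seq_NoDup].
  - apply Injective_map_NoDup; [intros a b; lia|apply seq_NoDup].
  - intros x H1 H2. apply in_map_iff in H1, H2.
    destruct H1 as [a [<- _]]. destruct H2 as [b [E _]]. lia.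
Qed.

Lemma zwindow_in M k : (Z.abs k <= Z.of_nat M)%Z -> In k (zwindow M).
Proof.
  intro H. unfold zwindow. apply in_or_app. destruct (Z_le_gt_dec 0 k).
  - left. apply in_map_iff. exists (Z.to_nat k). split; [lia|]. apply in_seq; lia.
  - right. apply in_map_iff. exists (Z.to_nat (- k - 1)). split; [lia|]. apply in_seq; lia.
Qed.

Lemma zwindow_bound M k : In k (zwindow M) -> (Z.abs k <= Z.of_nat M + 1)%Z.
Proof.
  unfold zwindow. intro H. apply in_app_or in H.
  destruct H as [H|H]; apply in_map_iff in H; destruct H as [a [<- Ha]]; apply in_seq in Ha; lia.
Qed.

Lemma zsum_finite f M : (forall k, 0 <= f k) -> (forall k, (Z.of_nat M < Z.abs k)%Z -> f k = 0) ->
  zsum f = lsumA (zwindow M) f.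
Proof.
  intros H HM. unfold zsum, zwindow. rewrite lsumA_app, !lsumA_map.
  rewrite (nnsum_finite _ M), (nnsum_finite (fun t => f (- Z.of_nat (S t))%Z) M); auto.
  - intros k Hk. apply HM. lia.
  - intros k Hk. apply HM. lia.
Qed.

Lemma zsum_nonneg f : (forall k, 0 <= f k) -> 0 <= zsum f.
Proof.
  intro H. unfold zsum.
  assert (0 <= nnsum (fun t => f (Z.of_nat t))) by (apply nnsum_nonneg; auto).
  assert (0 <= nnsum (fun t => f (- Z.of_nat (S t))%Z)) by (apply nnsum_nonneg; auto). lra.
Qed.

Lemma zsum_zero f : (forall k, f k = 0) -> zsum f = 0.
Proof. intro H. rewrite (zsum_finite f 0); [apply lsumA_zero|..]; intros; rewrite H; lra. Qed.

Lemma zsum_le f g M : (forall k, 0 <= f k <= g k) ->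
  (forall k, (Z.of_nat M < Z.abs k)%Z -> g k = 0) -> zsum f <= zsum g.
Proof.
  intros H HM. rewrite (zsum_finite f M), (zsum_finite g M).
  - apply lsumA_le; intros; apply H.
  - intro k; specialize (H k); lra.
  - auto.
  - intro k; specialize (H k); lra.
  - intros k Hk; specialize (H k); specialize (HM k Hk); lra.
Qed.

Lemma zsum_ge_term f M k0 : (forall k, 0 <= f k) ->
  (forall k, (Z.of_nat M < Z.abs k)%Z -> f k = 0) -> f k0 <= zsum f.
Proof.
  intros H HM. rewrite (zsum_finite f M); auto.
  destruct (Z_le_gt_dec (Z.abs k0) (Z.of_nat M)).
  - apply lsumA_ge_term; auto. apply zwindow_in; auto.
  - rewrite HM by lia. apply lsumA_nonneg; auto.
Qed.

Lemma nat_least (P : nat -> Prop) n : P n -> exists m, P m /\ forall k, P k -> (m <= k)%nat.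
Proof.
  induction n as [n IH] using (well_founded_induction lt_wf). intro Hn.
  destruct (classic (exists k, (k < n)%nat /\ P k)) as [[k [Hk Pk]]|Hno].
  - apply (IH k Hk Pk).
  - exists n; split; auto. intros k Pk. destruct (le_lt_dec n k); auto. exfalso; eauto.
Qed.

Lemma Z_greatest (P : Z -> Prop) m0 top : P m0 -> (forall m, P m -> (m <= top)%Z) ->
  exists m, P m /\ forall m', P m' -> (m' <= m)%Z.
Proof.
  intros H0 Htop.
  destruct (nat_least (fun k => P (top - Z.of_nat k)%Z) (Z.to_nat (top - m0))) as [k [Pk Hk]].
  - specialize (Htop m0 H0). replace (top - Z.of_nat (Z.to_nat (top - m0)))%Z with m0 by lia. auto.
  - exists (top - Z.of_nat k)%Z. split; auto. intros m' Pm'. specialize (Htop m' Pm').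
    assert (k <= Z.to_nat (top - m'))%nat; [|lia].
    apply Hk. replace (top - Z.of_nat (Z.to_nat (top - m')))%Z with m' by lia; auto.
Qed.

Lemma Z_least (P : Z -> Prop) m0 bot : P m0 -> (forall m, P m -> (bot <= m)%Z) ->
  exists m, P m /\ forall m', P m' -> (m <= m')%Z.
Proof.
  intros H0 Hb.
  destruct (nat_least (fun k => P (bot + Z.of_nat k)%Z) (Z.to_nat (m0 - bot))) as [k [Pk Hk]].
  - specialize (Hb m0 H0). replace (bot + Z.of_nat (Z.to_nat (m0 - bot)))%Z with m0 by lia. auto.
  - exists (bot + Z.of_nat k)%Z. split; auto. intros m' Pm'. specialize (Hb m' Pm').
    assert (k <= Z.to_nat (m' - bot))%nat; [|lia].
    apply Hk. replace (bot + Z.of_nat (Z.to_nat (m' - bot)))%Z with m' by lia; auto.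
Qed.

Section Excursions.
Variables (B U : pt -> Prop) (w : config) (i : nat).
Hypothesis B_in_U : forall y, B y -> U y.
Hypothesis leaves_U : exists M : nat, forall n, (Z.of_nat M <= Z.abs n)%Z -> ~ U (traj w i n).

Lemma excursion_of_visit n' : B (traj w i n') ->
  exists n, (n <= n')%Z /\ exc_start B U w i n /\
            forall k, (n <= k <= n')%Z -> U (traj w i k).
Proof.
  intro Hb. destruct leaves_U as [M HM].
  (* m: last time before n' outside U; n: first visit to B after m *)
  set (P := fun m => (m < n')%Z /\ ~ U (traj w i m)).
  destruct (Z_greatest P (- (Z.of_nat M + Z.abs n' + 1))%Z n') as [m [[Hm1 Hm2] Hmax]].
  { split; [lia|]. apply HM; lia. }
  { intros m [? _]; lia. }
  set (Q := fun k => (m < k <= n')%Z /\ B (traj w i k)).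
  destruct (Z_least Q n' m) as [n [[Hn1 Hn2] Hmin]].
  { split; auto; lia. }
  { intros k [? _]; lia. }
  exists n. split; [lia|]. split.
  - split; auto. exists m. split; [lia|]. split; auto. intros k Hk Bk.
    assert (n <= k)%Z by (apply Hmin; split; auto; lia). lia.
  - intros k Hk. destruct (Z.eq_dec k n'); [subst; auto|].
    apply NNPP; intro nU. assert (k <= m)%Z by (apply Hmax; split; auto; lia). lia.
Qed.

Lemma excursion_unique n1 n2 n' : exc_start B U w i n1 -> exc_start B U w i n2 ->
  (forall k, (n1 <= k <= n')%Z -> U (traj w i k)) ->
  (forall k, (n2 <= k <= n')%Z -> U (traj w i k)) ->
  (n1 <= n')%Z -> (n2 <= n')%Z -> n1 = n2.
Proof.
  intros S1 S2 U1 U2 L1 L2.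
  assert (Hno : forall a b, exc_start B U w i a -> exc_start B U w i b ->
    (forall k, (a <= k <= n')%Z -> U (traj w i k)) -> (a <= n')%Z -> (b <= n')%Z -> ~ (a < b)%Z).
  { intros a b [Ba _] [_ [m [Hm [nU Hfirst]]]] Ua La Lb Hab.
    destruct (Z_lt_le_dec m a).
    - apply (Hfirst a); auto; lia.
    - apply nU. apply Ua. lia. }
  destruct (Z.lt_trichotomy n1 n2) as [H1|[H1|H1]]; auto; exfalso.
  - apply (Hno n1 n2 S1 S2 U1 L1 L2 H1).
  - apply (Hno n2 n1 S2 S1 U2 L2 L1 H1).
Qed.
End Excursions.

Lemma coord_bound (f : nat -> Z) d :
  exists R0, (0 <= R0)%Z /\ forall k, (k < d)%nat -> (Z.abs (f k) <= R0)%Z.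
Proof.
  induction d as [|d [R0 [H0 H]]]; [exists 0%Z; split; [lia|]; intros; lia|].
  exists (Z.max R0 (Z.abs (f d))). split; [lia|].
  intros k Hk. destruct (Nat.eq_dec k d); [subst; lia|]. specialize (H k ltac:(lia)). lia.
Qed.

Lemma Uset_bounded d L K z : exists r : nat, forall y, Uset d L K z y -> ball d origin r y.
Proof.
  destruct (coord_bound z d) as [R0 [H0 H]]. exists (Z.to_nat (R0 + Z.of_nat (K * L))).
  intros y [Vy Hy]. split; auto. intros k Hk. specialize (Hy k Hk). specialize (H k Hk).
  unfold origin. lia.
Qed.

Lemma Bset_in_Uset d L K z : (1 <= L)%nat -> (100 <= K)%nat ->
  forall y, Bset d L z y -> Uset d L K z y.
Proof.
  intros HL HK y [Vy Hy]. split; auto. intros k Hk. specialize (Hy k Hk).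
  assert (Z.of_nat L + 1 <= Z.of_nat (K * L))%Z by nia. lia.
Qed.

Lemma rect_list_in d a lo hi x : In x (rect_list d a lo hi) -> in_rect d a lo hi x.
Proof.
  revert x. induction d; simpl; intros x Hx.
  - destruct Hx as [<-|[]]. split; [intros k _; reflexivity|intros; lia].
  - apply in_flat_map in Hx. destruct Hx as [p [Hp Hx]]. apply in_map_iff in Hx.
    destruct Hx as [t [<- Ht]]. destruct (IHd p Hp) as [Vp Hpb].
    unfold zrange in Ht. apply in_map_iff in Ht. destruct Ht as [m [<- Hm]]. apply in_seq in Hm.
    split.
    + intros j Hj. destruct (Nat.eqb_spec j d); [lia|]. apply Vp; lia.
    + intros j Hj. destruct (Nat.eqb_spec j d); [subst; lia|]. apply Hpb; lia.
Qed.

Lemma padd_ball d x Rr y : valid d x -> ball d origin Rr y -> ball d x Rr (padd x y).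
Proof.
  intros Vx [Vy Hy]. split.
  - intros k Hk. unfold padd. rewrite Vx, Vy; auto.
  - intros k Hk. specialize (Hy k Hk). unfold padd, origin in *. lia.
Qed.

Lemma padd_origin x : padd x origin = x.
Proof. apply functional_extensionality; intro k; unfold padd, origin; lia. Qed.

Section Finiteness.
Variables (d L K : nat) (z : pt) (w : config).
Hypothesis Hw : interlacement_like d w.

Lemma traj_leaves_U i :
  exists M : nat, forall n, (Z.of_nat M <= Z.abs n)%Z -> ~ Uset d L K z (traj w i n).
Proof.
  destruct (Uset_bounded d L K z) as [r Hr]. destruct Hw as (_&_&_&_&_&Ht&_).
  destruct (Ht i r) as [N HN]. exists (Z.to_nat N). intros n Hn HU. apply (HN n); [lia|auto].
Qed.

Lemma finitely_many_meet_U v : exists N : nat, forall i, (N <= i)%nat -> lab w i <= v ->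
  forall n, ~ Uset d L K z (traj w i n).
Proof.
  destruct (Uset_bounded d L K z) as [r Hr]. destruct Hw as (_&_&_&_&_&_&Hf).
  destruct (Hf v r) as [N HN]. exists N. intros i Hi Hl n HU. apply (HN i Hi Hl n). auto.
Qed.
End Finiteness.

Lemma bounded_lists_finite (P : nat -> Prop) K :
  (forall l, NoDup l -> (forall i, In i l -> P i) -> (length l <= K)%nat) ->
  exists N, forall i, (N < i)%nat -> ~ P i.
Proof.
  intro H. apply NNPP; intro Hn.
  assert (Hall : forall N, exists i, (N < i)%nat /\ P i).
  { intro N. apply NNPP; intro H1. apply Hn. exists N. intros i Hi Pi. apply H1; eauto. }
  assert (Hlists : forall k, exists l, NoDup l /\ (forall i, In i l -> P i) /\ length l = k).
  { induction k as [|k [l [ND [HP Hl]]]].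
    - exists nil; repeat split; [constructor|intros ? []].
    - destruct (Hall (fold_right Nat.max 0%nat l)) as [i [Hi Pi]].
      assert (Hb : forall j, In j l -> (j <= fold_right Nat.max 0 l)%nat).
      { clear. induction l; simpl; [tauto|]. intros j [->|Hj]; [lia|]. specialize (IHl j Hj); lia. }
      exists (i :: l). repeat split.
      + constructor; auto. intro Hil. specialize (Hb i Hil). lia.
      + intros j [->|Hj]; auto.
      + simpl; lia. }
  destruct (Hlists (S K)) as [l [ND [HP Hl]]]. specialize (H l ND HP). lia.
Qed.

Section Ranks.
Variables (d L K : nat) (z : pt) (w : config).
Hypothesis Hw : interlacement_like d w.
Hypothesis HL : (1 <= L)%nat.
Hypothesis HK : (100 <= K)%nat.
Let B := Bset d L z.
Let U := Uset d L K z.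

Lemma starts_bounded j : exists M : nat, forall m, (Z.of_nat M < Z.abs m)%Z -> ~ exc_start B U w j m.
Proof.
  destruct (traj_leaves_U d L K z w Hw j) as [M HM]. exists M. intros m Hm [Bm _].
  apply (HM m); [lia|]. apply Bset_in_Uset; auto.
Qed.

Lemma starts_finitely_many v : exists N : nat, forall j, (N <= j)%nat -> lab w j <= v ->
  forall m, ~ exc_start B U w j m.
Proof.
  destruct (finitely_many_meet_U d L K z w Hw v) as [N HN]. exists N. intros j Hj Hl m [Bm _].
  apply (HN j Hj Hl m). apply Bset_in_Uset; auto.
Qed.

Lemma count_starts_mono (P Q : Z -> Prop) j : (forall m, P m -> Q m) ->
  (forall m, Q m -> exc_start B U w j m) ->
  zsum (fun m => indic (P m)) <= zsum (fun m => indic (Q m)).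
Proof.
  intros HPQ HQ. destruct (starts_bounded j) as [M HM]. apply (zsum_le _ _ M).
  - intro k. split; [apply indic_range|apply indic_mono; auto].
  - intros k Hk. apply indic_false. intro Qk. apply (HM k Hk). auto.
Qed.

Lemma count_starts_pos (P : Z -> Prop) j k0 : (forall m, P m -> exc_start B U w j m) -> P k0 ->
  1 <= zsum (fun m => indic (P m)).
Proof.
  intros HP Pk. destruct (starts_bounded j) as [M HM]. rewrite <- (indic_true (P k0) Pk).
  apply (zsum_ge_term (fun m => indic (P m)) M k0).
  - intro; apply indic_range.
  - intros k Hk. apply indic_false. intro Pk'. apply (HM k Hk); auto.
Qed.

Lemma count_nonneg (P : Z -> Prop) : 0 <= zsum (fun m => indic (P m)).
Proof. apply zsum_nonneg; intro; apply indic_range. Qed.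

Lemma rank_le_Nu u i n : lab w i <= u -> exc_rank B U w i n <= Nu B U w u.
Proof.
  intro Hi. unfold exc_rank, Nu. destruct (starts_finitely_many u) as [N HN].
  apply (nnsum_le _ _ N).
  - intro j. split; [apply count_nonneg|].
    destruct (Rle_dec (lab w j) u) as [Hj|Hj].
    + rewrite indic_true, Rmult_1_l by auto. apply (count_starts_mono _ _ j); tauto.
    + rewrite indic_false, Rmult_0_l by auto. rewrite zsum_zero; [lra|].
      intro m. apply indic_false. intros [_ [H|[-> _]]]; lra.
  - intros j Hj. destruct (Rle_dec (lab w j) u) as [Hl|Hl].
    + rewrite zsum_zero; [lra|]. intro m. apply indic_false. apply HN; auto; lia.
    + rewrite indic_false by auto; lra.
Qed.

Lemma rank_gt_Nu u i n : lab w i > u -> exc_start B U w i n ->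
  Nu B U w u + 1 <= exc_rank B U w i n.
Proof.
  intros Hi Si. unfold exc_rank, Nu. destruct (starts_finitely_many (lab w i)) as [N HN].
  apply (nnsum_le_gain _ _ N i).
  - intro j. split; [apply Rmult_le_pos; [apply indic_range|apply count_nonneg]|].
    destruct (Rle_dec (lab w j) u) as [Hj|Hj].
    + rewrite indic_true, Rmult_1_l by auto. apply (count_starts_mono _ _ j); [|tauto].
      intros m Hm. split; auto. left; lra.
    + rewrite indic_false, Rmult_0_l by auto. apply count_nonneg.
  - intros j Hj. apply zsum_zero. intro m. apply indic_false. intros [S [H|[-> _]]].
    + apply (HN j ltac:(lia) ltac:(lra) m S).
    + apply (HN i ltac:(lia) ltac:(lra) m S).
  - rewrite indic_false, Rmult_0_l, Rplus_0_l by lra.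
    apply (count_starts_pos _ i n); [tauto|]. split; auto. right; split; auto; lia.
Qed.

Lemma max_label (l : list nat) : l <> nil ->
  exists i0, In i0 l /\ forall j, In j l -> lab w j <= lab w i0.
Proof.
  induction l as [|a l IH]; [congruence|]. intros _. destruct l as [|b l'].
  - exists a. split; [left; auto|]. intros j [->|[]]; lra.
  - destruct IH as [i0 [Hi0 Hm]]; [congruence|].
    destruct (Rle_dec (lab w a) (lab w i0)).
    + exists i0. split; [right; auto|]. intros j [->|Hj]; auto.
    + exists a. split; [left; auto|]. intros j [->|Hj]; [lra|]. specialize (Hm j Hj). lra.
Qed.

(* An excursion ranks after at least one excursion of each trajectory with
   smaller label (labels are distinct). *)
Lemma rank_ge_count l i0 n0 : NoDup l -> (forall j, In j l -> exists m, exc_start B U w j m) ->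
  (forall j, In j l -> lab w j <= lab w i0) -> exc_start B U w i0 n0 ->
  INR (length l) <= exc_rank B U w i0 n0.
Proof.
  intros ND Hs Hlab S0. unfold exc_rank. destruct (starts_finitely_many (lab w i0)) as [N HN].
  rewrite <- lsumA_ones. eapply Rle_trans; [apply lsumA_le|apply (lsumA_le_nnsum _ N); auto].
  - intros j Hj. simpl. destruct (Nat.eq_dec j i0) as [->|ne].
    + apply (count_starts_pos _ i0 n0); [tauto|]. split; auto. right; split; auto; lia.
    + destruct (Hs j Hj) as [m Sm].
      assert (lab w j <> lab w i0) by (intro E; destruct Hw as (_&_&_&_&Hinj&_); apply ne, Hinj, E).
      specialize (Hlab j Hj).
      apply (count_starts_pos _ j m); [tauto|]. split; auto. left; lra.
  - intro; apply count_nonneg.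
  - intros j Hj. apply zsum_zero. intro m. apply indic_false. intros [S [H|[-> _]]].
    + apply (HN j ltac:(lia) ltac:(lra) m S).
    + apply (HN i0 ltac:(lia) ltac:(lra) m S).
Qed.

Lemma ranked_trajectories_finite a : exists N, forall i, (N < i)%nat ->
  ~ (exists n, exc_start B U w i n /\ exc_rank B U w i n <= a).
Proof.
  apply (bounded_lists_finite _ (Z.to_nat (up a))). intros l ND HP.
  destruct l as [|x l'] eqn:El; [simpl; lia|]. rewrite <- El in *.
  destruct (max_label l) as [i0 [Hi0 Hm]]; [subst; congruence|].
  destruct (HP i0 Hi0) as [n0 [S0 Hr]].
  assert (Hlen : INR (length l) <= a).
  { apply Rle_trans with (exc_rank B U w i0 n0); auto. apply rank_ge_count; auto.
    intros j Hj. destruct (HP j Hj) as [m [Sm _]]; eauto. }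
  destruct (archimed a) as [Ha _]. rewrite INR_IZR_INZ in Hlen.
  assert (Z.of_nat (length l) < up a)%Z by (apply lt_IZR; lra). lia.
Qed.
End Ranks.

Definition Zpair_nat_dec : forall x y : Z * nat, {x = y} + {x <> y}.
Proof. decide equality; [apply Nat.eq_dec|apply Z.eq_dec]. Defined.

Section Comparison.
Variables (d L K : nat) (z : pt) (w : config).
Hypothesis Hw : interlacement_like d w.
Hypothesis HL : (1 <= L)%nat.
Hypothesis HK : (100 <= K)%nat.
Let B := Bset d L z.
Let U := Uset d L K z.

Lemma hold_pos i n : 0 < hold w i n.
Proof. destruct Hw as (_&_&H&_). apply H. Qed.

Lemma visit_term_nonneg i n x : 0 <= hold w i n * indic (traj w i n = x).
Proof. pose proof (hold_pos i n). pose proof (indic_range (traj w i n = x)). nra. Qed.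

Definition step_time i n x t : R :=
  indic (forall j, (j <= t)%nat -> U (traj w i (n + Z.of_nat j)%Z))
  * hold w i (n + Z.of_nat t)%Z * indic (traj w i (n + Z.of_nat t)%Z = x).

Definition counted a i n : R := indic (exc_start B U w i n /\ exc_rank B U w i n <= a).

Lemma step_time_nonneg i n x t : 0 <= step_time i n x t.
Proof.
  unfold step_time. pose proof (hold_pos i (n + Z.of_nat t)).
  pose proof (indic_range (forall j, (j <= t)%nat -> U (traj w i (n + Z.of_nat j)%Z))).
  pose proof (indic_range (traj w i (n + Z.of_nat t)%Z = x)).
  apply Rmult_le_pos; [apply Rmult_le_pos|]; lra.
Qed.

Lemma step_time_neq0 i n x t : step_time i n x t <> 0 ->
  (forall j, (j <= t)%nat -> U (traj w i (n + Z.of_nat j)%Z)) /\ traj w i (n + Z.of_nat t)%Z = x.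
Proof. unfold step_time. intro H. split; apply indic_neq0; intro E; apply H; rewrite E; ring. Qed.

Lemma counted_term_nonneg a i n x : 0 <= counted a i n * exc_time U w i n x.
Proof.
  apply Rmult_le_pos; [apply indic_range|]. apply nnsum_nonneg. intro; apply step_time_nonneg.
Qed.

Lemma exc_time_finite i M n x : (forall m, (Z.of_nat M <= Z.abs m)%Z -> ~ U (traj w i m)) ->
  (Z.abs n <= Z.of_nat M + 1)%Z ->
  exc_time U w i n x = lsumA (seq 0 (S (2 * M + 2))) (step_time i n x).
Proof.
  intros HM Hn. apply nnsum_finite; [intro; apply step_time_nonneg|].
  intros t Ht. destruct (Req_dec (step_time i n x t) 0) as [E|E]; auto.
  exfalso. apply step_time_neq0 in E. destruct E as [HU _].
  apply (HM (n + Z.of_nat t)%Z); [lia|]. apply HU; lia.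
Qed.

Lemma excursion_time_as_lsumA a i M x :
  (forall m, (Z.of_nat M <= Z.abs m)%Z -> ~ U (traj w i m)) ->
  zsum (fun n => counted a i n * exc_time U w i n x) =
  lsumA (list_prod (zwindow M) (seq 0 (S (2 * M + 2))))
        (fun p => counted a i (fst p) * step_time i (fst p) x (snd p)).
Proof.
  intro HM. rewrite (zsum_finite _ M).
  - rewrite lsumA_prod. apply lsumA_ext. intros n Hn.
    rewrite (lsumA_scal _ (counted a i n) (step_time i n x)).
    rewrite (exc_time_finite i M n x HM); [reflexivity|apply zwindow_bound; auto].
  - intro n. apply counted_term_nonneg.
  - intros n Hn. unfold counted. rewrite indic_false; [ring|]. intros [[Bn _] _].
    apply (HM n); [lia|]. apply Bset_in_Uset; auto.
Qed.

Lemma visit_time_as_lsumA i M x : U x ->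
  (forall m, (Z.of_nat M <= Z.abs m)%Z -> ~ U (traj w i m)) ->
  zsum (fun n => hold w i n * indic (traj w i n = x)) =
  lsumA (zwindow M) (fun n => hold w i n * indic (traj w i n = x)).
Proof.
  intros Ux HM. apply zsum_finite; [intro; apply visit_term_nonneg|].
  intros n Hn. rewrite indic_false; [ring|]. intro E. apply (HM n); [lia|]. rewrite E; auto.
Qed.

Definition step_at i (p : Z * nat) (n' : Z) : Prop :=
  n' = (fst p + Z.of_nat (snd p))%Z /\ exc_start B U w i (fst p) /\
  forall j, (j <= snd p)%nat -> U (traj w i (fst p + Z.of_nat j)%Z).

Lemma step_at_injective i p1 p2 n' : step_at i p1 n' -> step_at i p2 n' -> p1 = p2.
Proof.
  destruct p1 as [n1 t1], p2 as [n2 t2]. intros [E1 [S1 C1]] [E2 [S2 C2]]. simpl in *.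
  assert (n1 = n2); [|subst; f_equal; lia].
  apply (excursion_unique B U w i n1 n2 n' S1 S2); try lia.
  - intros k Hk. replace k with (n1 + Z.of_nat (Z.to_nat (k - n1)))%Z by lia. apply C1. lia.
  - intros k Hk. replace k with (n2 + Z.of_nat (Z.to_nat (k - n2)))%Z by lia. apply C2. lia.
Qed.

Lemma excursion_time_le_visit_time a i x : U x ->
  zsum (fun n => counted a i n * exc_time U w i n x)
  <= zsum (fun n => hold w i n * indic (traj w i n = x)).
Proof.
  intro Ux. destruct (traj_leaves_U d L K z w Hw i) as [M HM].
  rewrite (excursion_time_as_lsumA a i M x HM), (visit_time_as_lsumA i M x Ux HM).
  apply (lsumA_le_inj Z.eq_dec _ _ _ _ (step_at i)).
  - apply NoDup_list_prod; [apply zwindow_NoDup|apply seq_NoDup].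
  - apply zwindow_NoDup.
  - intro n. apply visit_term_nonneg.
  - intros [n t] _. simpl.
    destruct (Req_dec (counted a i n * step_time i n x t) 0) as [E|E]; [left; lra|right].
    assert (Hc : counted a i n <> 0) by (intro E'; apply E; rewrite E'; ring).
    assert (Hh : step_time i n x t <> 0) by (intro E'; apply E; rewrite E'; ring).
    apply indic_neq0 in Hc. destruct Hc as [Sn _].
    destruct (step_time_neq0 _ _ _ _ Hh) as [HU Hx].
    exists (n + Z.of_nat t)%Z. split; [|split; [split; [reflexivity|split; auto]|]].
    + apply zwindow_in. destruct (Z_le_gt_dec (Z.abs (n + Z.of_nat t)) (Z.of_nat M)); auto.
      exfalso. apply (HM (n + Z.of_nat t)%Z); [lia|]. apply HU; lia.
    + unfold step_time. rewrite (indic_true _ HU), (indic_true _ Hx).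
      pose proof (indic_range (exc_start B U w i n /\ exc_rank B U w i n <= a)).
      pose proof (hold_pos i (n + Z.of_nat t)). unfold counted. nra.
  - intros p1 p2 n' _ _ H1 H2. apply (step_at_injective i p1 p2 n' H1 H2).
Qed.

Lemma visit_time_le_excursion_time a i x : B x ->
  (forall n, exc_start B U w i n -> exc_rank B U w i n <= a) ->
  zsum (fun n => hold w i n * indic (traj w i n = x))
  <= zsum (fun n => counted a i n * exc_time U w i n x).
Proof.
  intros Bx Hr. assert (Ux : U x) by (apply Bset_in_Uset; auto).
  destruct (traj_leaves_U d L K z w Hw i) as [M HM].
  rewrite (excursion_time_as_lsumA a i M x HM), (visit_time_as_lsumA i M x Ux HM).
  apply (lsumA_le_inj Zpair_nat_dec _ _ _ _ (fun n' p => n' = (fst p + Z.of_nat (snd p))%Z)).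
  - apply zwindow_NoDup.
  - apply NoDup_list_prod; [apply zwindow_NoDup|apply seq_NoDup].
  - intros [n t]. simpl. apply Rmult_le_pos; [apply indic_range|apply step_time_nonneg].
  - intros n' Hn'. destruct (classic (traj w i n' = x)) as [Ex|Ex].
    2: { left. rewrite indic_false by auto. lra. }
    right. assert (Hb : B (traj w i n')) by (rewrite Ex; auto).
    destruct (excursion_of_visit B U w i (Bset_in_Uset d L K z HL HK)
                (traj_leaves_U d L K z w Hw i) n' Hb) as [n [Hle [Sn Ch]]].
    apply zwindow_bound in Hn'.
    assert (Hn : (Z.abs n < Z.of_nat M)%Z).
    { destruct (Z_lt_le_dec (Z.abs n) (Z.of_nat M)); auto.
      exfalso. apply (HM n); auto. apply Ch; lia. }
    exists (n, Z.to_nat (n' - n)). cbn [fst snd].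
    assert (Et : (n + Z.of_nat (Z.to_nat (n' - n)))%Z = n') by lia.
    split; [|split; auto].
    + apply in_prod_iff. split; [apply zwindow_in; lia|]. apply in_seq. lia.
    + unfold counted, step_time. rewrite Et, (indic_true (traj w i n' = x) Ex).
      rewrite indic_true by (split; auto). rewrite indic_true; [lra|].
      intros j Hj. apply Ch. lia.
  - intros a1 a2 b _ _ -> ->. reflexivity.
Qed.

Lemma LB_nonneg a x : 0 <= LB B U w a x.
Proof. apply nnsum_nonneg. intro i. apply zsum_nonneg. intro n. apply counted_term_nonneg. Qed.

Lemma Lu_nonneg u x : 0 <= Lu w u x.
Proof.
  apply nnsum_nonneg. intro i. apply Rmult_le_pos; [apply indic_range|].
  apply zsum_nonneg. intro n. apply visit_term_nonneg.
Qed.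

(* Excursions never leave U, so L^B_a vanishes outside U. *)
Lemma LB_outside_U a x : ~ U x -> LB B U w a x = 0.
Proof.
  intro nUx. apply nnsum_zero. intro i. apply zsum_zero. intro n.
  replace (exc_time U w i n x) with 0; [ring|]. symmetry. apply nnsum_zero. intro t.
  destruct (Req_dec (step_time i n x t) 0) as [E|E]; auto. exfalso.
  destruct (step_time_neq0 _ _ _ _ E) as [HU Hx]. apply nUx. rewrite <- Hx. apply HU; lia.
Qed.

Lemma LB_le_Lu u a x : a <= Nu B U w u -> LB B U w a x <= Lu w u x.
Proof.
  intro Ha. destruct (classic (U x)) as [Ux|nUx].
  2: { rewrite LB_outside_U by auto. apply Lu_nonneg. }
  destruct (finitely_many_meet_U d L K z w Hw u) as [N HN].
  apply (nnsum_le _ _ N).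
  - intro i. split; [apply zsum_nonneg; intro; apply counted_term_nonneg|].
    destruct (Rle_dec (lab w i) u) as [Hl|Hl].
    + rewrite indic_true, Rmult_1_l by auto. apply excursion_time_le_visit_time; auto.
    + rewrite indic_false, Rmult_0_l by auto. right. apply zsum_zero. intro n.
      unfold counted. rewrite indic_false; [ring|]. intros [Sn Hr].
      pose proof (rank_gt_Nu d L K z w Hw HL HK u i n ltac:(lra) Sn). unfold B, U in *. lra.
  - intros i Hi. destruct (Rle_dec (lab w i) u) as [Hl|Hl].
    + rewrite zsum_zero; [ring|]. intro n. rewrite indic_false; [ring|]. intro E.
      apply (HN i ltac:(lia) Hl n). rewrite E; auto.
    + rewrite indic_false by auto; ring.
Qed.

(* If N_u(B) <= a, every excursion of level u is among the first a, so
   L^u_x <= L^B_{a,x} for x in B. *)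
Lemma Lu_le_LB u a x : Nu B U w u <= a -> B x -> Lu w u x <= LB B U w a x.
Proof.
  intros Ha Bx. destruct (ranked_trajectories_finite d L K z w Hw HL HK a) as [N HN].
  apply (nnsum_le _ _ N).
  - intro i. split.
    + apply Rmult_le_pos; [apply indic_range|]. apply zsum_nonneg. intro; apply visit_term_nonneg.
    + destruct (Rle_dec (lab w i) u) as [Hl|Hl].
      * rewrite indic_true, Rmult_1_l by auto. apply visit_time_le_excursion_time; auto.
        intros n Sn. pose proof (rank_le_Nu d L K z w Hw HL HK u i n Hl). unfold B, U in *. lra.
      * rewrite indic_false, Rmult_0_l by auto.
        apply zsum_nonneg. intro; apply counted_term_nonneg.
  - intros i Hi. apply zsum_zero. intro n. unfold counted. rewrite indic_false; [ring|].
    intro H. apply (HN i Hi). exists n; auto.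
Qed.
End Comparison.

Lemma Rinv_nonneg x : 0 <= x -> 0 <= / x.
Proof.
  intro H. destruct (Req_dec x 0) as [->|ne]; [rewrite Rinv_0; lra|].
  left; apply Rinv_0_lt_compat; lra.
Qed.

Lemma avoid_nonneg d (B : pt -> Prop) n y : 0 <= avoid d B n y.
Proof.
  revert y. induction n; intro y; simpl; [lra|].
  apply Rmult_le_pos; [apply Rinv_nonneg, pos_INR|].
  unfold nbr_sum. induction (seq 0 d); simpl; [lra|].
  assert (forall v, 0 <= indic (~ B v) * avoid d B n v)
    by (intro v; apply Rmult_le_pos; [apply indic_range|auto]).
  pose proof (H (padd y (unitv a 1))). pose proof (H (padd y (unitv a (-1)))). lra.
Qed.

Lemma inf_seq_nonneg u : (forall n, 0 <= u n) -> 0 <= inf_seq u.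
Proof.
  intro H. unfold inf_seq, sup_seq. destruct excluded_middle_informative; [|lra].
  destruct completeness as [m [Hub Hlub]]. simpl.
  assert (m <= 0); [|lra]. apply Hlub. intros r [n ->]. specialize (H n). lra.
Qed.

Lemma ebar_nonneg d L z x : 0 <= ebar d L z x.
Proof.
  assert (Heqm : forall y, 0 <= Defs.eqm d (Bset d L z) y).
  { intro y. unfold eqm. apply Rmult_le_pos; [apply indic_range|].
    apply inf_seq_nonneg. intro; apply avoid_nonneg. }
  unfold ebar. apply Rmult_le_pos; [auto|]. apply Rinv_nonneg, lsumA_nonneg. auto.
Qed.

Lemma Bsize_pos d L : (1 <= L)%nat -> 0 < Bsize d L.
Proof. intro H. unfold Bsize. apply lt_0_INR. apply Nat.neq_0_lt_0, Nat.pow_nonzero. lia. Qed.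

Lemma good_box_bounds d L K z w F theta Sig kappa mu alpha :
  good_box d L K z w F theta Sig kappa mu -> In alpha Sig ->
  let LBa := LB (Bset d L z) (Uset d L K z) w (alpha * capB d L z) in
  (alpha * (1 - kappa) < lsum (Blist d L z) (fun x => ebar d L z x * LBa x) < alpha * (1 + kappa)) /\
  (theta (alpha * (1 - kappa)) - mu <
     / Bsize d L * lsum (Blist d L z) (fun x => F (fun y => LBa (padd x y)))
     < theta (alpha * (1 + kappa)) + mu) /\
  (alpha * (1 - kappa) < / Bsize d L * lsum (Blist d L z) LBa < alpha * (1 + kappa)).
Proof.
  intros Hg Ha LBa.
  assert (H1 : ~ bad_event d L K z w F theta alpha kappa mu)
    by (intro; apply Hg; exists alpha; auto).
  assert (H2 : ~ bad_event d L K z w F0 (fun u => u) alpha kappa 0)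
    by (intro; apply Hg; exists alpha; auto).
  unfold bad_event in H1, H2. apply not_or_and in H1, H2.
  destruct H1 as [A1 A2], H2 as [_ A3]. apply NNPP in A1, A2, A3.
  fold LBa in A1, A2, A3.
  assert (Hm : lsum (Blist d L z) (fun x => F0 (fun y => LBa (padd x y))) = lsum (Blist d L z) LBa)
    by (apply lsumA_ext; intros; unfold F0; rewrite padd_origin; reflexivity).
  rewrite Hm in A3. repeat split; try tauto; lra.
Qed.

(* A good box has positive capacity (otherwise ebar_B vanishes). *)
Lemma good_box_cap_pos d L K z w F theta Sig kappa mu alpha :
  good_box d L K z w F theta Sig kappa mu -> In alpha Sig -> 0 < alpha -> 0 < kappa < 1 ->
  0 < capB d L z.
Proof.
  intros Hg Ha Hpos Hk. destruct (good_box_bounds _ _ _ _ _ _ _ _ _ _ _ Hg Ha) as [[H1 _] _].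
  assert (Hc : 0 <= capB d L z) by (apply lsumA_nonneg; intros; apply Rmult_le_pos;
    [apply indic_range|apply inf_seq_nonneg; intro; apply avoid_nonneg]).
  destruct Hc as [?|E]; auto. exfalso.
  assert (Hz : lsum (Blist d L z) (fun x => ebar d L z x
                 * LB (Bset d L z) (Uset d L K z) w (alpha * capB d L z) x) = 0).
  { apply lsumA_zero. intros x _. unfold ebar, Rdiv. rewrite <- E, Rinv_0. ring. }
  rewrite Hz in H1. nra.
Qed.

Lemma Nu_ratio_le (N c alpha : R) : 0 < c -> N / c <= alpha -> N <= alpha * c.
Proof.
  intros Hc H. apply (Rmult_le_compat_r c) in H; [|lra].
  unfold Rdiv in H. rewrite Rmult_assoc, Rinv_l, Rmult_1_r in H by lra. exact H.
Qed.

Lemma Nu_ratio_ge (N c alpha : R) : 0 < c -> alpha <= N / c -> alpha * c <= N.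
Proof.
  intros Hc H. apply (Rmult_le_compat_r c) in H; [|lra].
  unfold Rdiv in H. rewrite Rmult_assoc, Rinv_l, Rmult_1_r in H by lra. exact H.
Qed.

Section Estimates.
Variables (d Rr : nat) (F : (pt -> R) -> R) (cF : R) (theta : R -> R)
  (Sig : list R) (kappa mu : R) (L K : nat) (z : pt) (w : config).
Hypothesis HF : local_function d Rr F cF.
Hypothesis Hkappa : 0 < kappa < 1.
Hypothesis HL : (1 <= L)%nat.
Hypothesis HK : (100 <= K)%nat.
Hypothesis Hw : interlacement_like d w.
Hypothesis HSig_pos : forall a, In a Sig -> 0 < a.

Lemma F_mono f g : (forall y, ball d origin Rr y -> 0 <= f y <= g y) -> F f <= F g.
Proof. destruct HF as (_&_&H&_). apply H. Qed.

Lemma F_nonneg f : (forall y, ball d origin Rr y -> 0 <= f y) -> 0 <= F f.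
Proof. destruct HF as (_&H&_). apply H. Qed.

Lemma average_le (c : pt -> R) f g : (forall x, 0 <= c x) ->
  (forall x, In x (Blist d L z) -> f x <= g x) ->
  lsum (Blist d L z) (fun x => c x * f x) <= lsum (Blist d L z) (fun x => c x * g x).
Proof. intros Hc H. apply lsumA_le. intros x Hx. apply Rmult_le_compat_l; auto. Qed.

Lemma inv_Bsize_nonneg : 0 <= / Bsize d L.
Proof. left. apply Rinv_0_lt_compat, Bsize_pos, HL. Qed.

Lemma upper_estimates u alpha : In alpha Sig -> good_box d L K z w F theta Sig kappa mu ->
  Nu (Bset d L z) (Uset d L K z) w u / capB d L z <= alpha ->
  ebar_Lu d L z w u < (1 + kappa) * alpha /\
  mB_Lu d L z w u < (1 + kappa) * alpha /\
  / Bsize d L * lsum (Blist d L z)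
      (fun x => indic (in_BR d L z Rr x) * F (fun y => Lu w u (padd x y)))
    < theta ((1 + kappa) * alpha) + mu.
Proof.
  intros Ha Hg Hn.
  pose proof (good_box_cap_pos _ _ _ _ _ _ _ _ _ _ _ Hg Ha (HSig_pos alpha Ha) Hkappa) as Hc.
  destruct (good_box_bounds _ _ _ _ _ _ _ _ _ _ _ Hg Ha) as [[_ He] [[_ HFb] [_ Hm]]].
  set (a := alpha * capB d L z) in *.
  assert (Hna : Nu (Bset d L z) (Uset d L K z) w u <= a) by (apply Nu_ratio_le; auto).
  assert (Hle : forall x, Bset d L z x -> Lu w u x <= LB (Bset d L z) (Uset d L K z) w a x)
    by (intros; apply (Lu_le_LB d L K z w Hw HL HK); auto).
  pose proof inv_Bsize_nonneg as Hbs. rewrite Rmult_comm. split; [|split].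
  - eapply Rle_lt_trans; [|exact He]. apply average_le; [apply ebar_nonneg|].
    intros x Hx. apply Hle, rect_list_in, Hx.
  - eapply Rle_lt_trans; [|exact Hm]. apply Rmult_le_compat_l; auto.
    apply lsumA_le. intros x Hx. apply Hle, rect_list_in, Hx.
  - eapply Rle_lt_trans; [|exact HFb]. apply Rmult_le_compat_l; auto.
    apply lsumA_le. intros x Hx.
    assert (HF0 : 0 <= F (fun y => LB (Bset d L z) (Uset d L K z) w a (padd x y)))
      by (apply F_nonneg; intros; apply (LB_nonneg d L K z w Hw)).
    destruct (classic (in_BR d L z Rr x)) as [[[Vx Bx] HBR]|HBR].
    + (* the R-ball around x is inside B, where L^u <= L^B_a *)
      rewrite indic_true, Rmult_1_l by (split; [split|]; auto).
      apply F_mono. intros y Hy. split; [apply (Lu_nonneg d w Hw)|].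
      apply Hle, HBR, padd_ball; auto.
    + rewrite indic_false, Rmult_0_l by auto. exact HF0.
Qed.

Lemma lower_estimates u alpha : In alpha Sig -> good_box d L K z w F theta Sig kappa mu ->
  alpha <= Nu (Bset d L z) (Uset d L K z) w u / capB d L z ->
  (1 - kappa) * alpha < ebar_Lu d L z w u /\
  (1 - kappa) * alpha < mB_Lu d L z w u /\
  theta ((1 - kappa) * alpha) - mu <
    / Bsize d L * lsum (Blist d L z) (fun x => F (fun y => Lu w u (padd x y))).
Proof.
  intros Ha Hg Hn.
  pose proof (good_box_cap_pos _ _ _ _ _ _ _ _ _ _ _ Hg Ha (HSig_pos alpha Ha) Hkappa) as Hc.
  destruct (good_box_bounds _ _ _ _ _ _ _ _ _ _ _ Hg Ha) as [[He _] [[HFb _] [Hm _]]].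
  set (a := alpha * capB d L z) in *.
  assert (Hna : a <= Nu (Bset d L z) (Uset d L K z) w u) by (apply Nu_ratio_ge; auto).
  assert (Hle : forall x, LB (Bset d L z) (Uset d L K z) w a x <= Lu w u x)
    by (intros; apply (LB_le_Lu d L K z w Hw HL HK); auto).
  pose proof inv_Bsize_nonneg as Hbs. rewrite Rmult_comm. split; [|split].
  - eapply Rlt_le_trans; [exact He|]. apply average_le; [apply ebar_nonneg|auto].
  - eapply Rlt_le_trans; [exact Hm|]. apply Rmult_le_compat_l; auto.
    apply lsumA_le. auto.
  - eapply Rlt_le_trans; [exact HFb|]. apply Rmult_le_compat_l; auto.
    apply lsumA_le. intros x _. apply F_mono. intros y _.
    split; [apply (LB_nonneg d L K z w Hw)|auto].
Qed.

Definition box_values (u : R) : list R :=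
  Nu (Bset d L z) (Uset d L K z) w u / capB d L z
  :: ebar_Lu d L z w u :: mB_Lu d L z w u :: nil.

Lemma values_one_side u alpha : In alpha Sig -> good_box d L K z w F theta Sig kappa mu ->
  (forall v, In v (box_values u) -> v < (1 + kappa) * alpha) \/
  (forall v, In v (box_values u) -> (1 - kappa) * alpha < v).
Proof.
  intros Ha Hg. pose proof (HSig_pos alpha Ha).
  destruct (Rle_dec (Nu (Bset d L z) (Uset d L K z) w u / capB d L z) alpha) as [Hle|Hgt].
  - left. destruct (upper_estimates u alpha Ha Hg Hle) as [E1 [E2 _]].
    intros v [<-|[<-|[<-|[]]]]; auto. nra.
  - right. destruct (lower_estimates u alpha Ha Hg ltac:(lra)) as [E1 [E2 _]].
    intros v [<-|[<-|[<-|[]]]]; auto. nra.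
Qed.
End Estimates.

Lemma middle_not_isolated kappa a b c m M : 0 < kappa -> 0 < b -> a < b < c ->
  m <= a -> c <= M -> M < (1 + kappa) * b \/ (1 - kappa) * b < m ->
  ~ ((1 - kappa) * b < a < (1 + kappa) * b) -> ~ ((1 - kappa) * b < c < (1 + kappa) * b) -> False.
Proof. intros Hk Hb Habc Hm HM Hside Ha Hc. assert (0 < kappa * b) by nra. lra. Qed.

Lemma at_most_two_separated (P : R -> Prop) kappa m M : 0 < kappa ->
  (forall x, P x -> 0 < x /\ m <= x <= M /\ (M < (1 + kappa) * x \/ (1 - kappa) * x < m)) ->
  (forall x y, P x -> P y -> (1 - kappa) * x < y < (1 + kappa) * x -> y = x) ->
  forall a b c, P a -> P b -> P c -> a = b \/ b = c \/ a = c.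
Proof.
  intros Hk HP Hsep.
  assert (Hmid : forall x y t, P x -> P y -> P t -> x < y < t -> False).
  { intros x y t Px Py Pt Hxyt.
    destruct (HP x Px) as (_ & Hx & _), (HP t Pt) as (_ & Ht & _), (HP y Py) as (Hy & _ & Hside).
    apply (middle_not_isolated kappa x y t m M Hk Hy Hxyt); try lra; auto;
      intro H; [assert (x = y) by (apply Hsep; auto) | assert (t = y) by (apply Hsep; auto)]; lra. }
  intros a b c Pa Pb Pc.
  destruct (Rtotal_order a b) as [ab|[ab|ab]]; [| tauto |];
  destruct (Rtotal_order b c) as [bc|[bc|bc]]; try tauto;
  destruct (Rtotal_order a c) as [ac|[ac|ac]]; try tauto; exfalso;
  solve [ apply (Hmid a b c); auto | apply (Hmid a c b); auto | apply (Hmid b a c); auto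
        | apply (Hmid b c a); auto | apply (Hmid c a b); auto | apply (Hmid c b a); auto ].
Qed.

Theorem lemma2p4 (d : nat) (Hd : (3 <= d)%nat)
  (Rr : nat) (F : (pt -> R) -> R) (cF : R) (HF : local_function d Rr F cF)
  (theta : R -> R)
  (Sig : list R) (HSig_ne : Sig <> nil) (HSig_nd : NoDup Sig)
  (HSig_pos : forall a, In a Sig -> 0 < a)
  (kappa mu : R) (Hkappa : 0 < kappa < 1) (Hmu : 0 <= mu)
  (L K : nat) (HL : (1 <= L)%nat) (HK : (100 <= K)%nat)
  (z : pt) (Hz : in_lattice d L z)
  (w : config) (Hw : interlacement_like d w) :
  (forall u alpha, 0 < u -> In alpha Sig ->
     good_box d L K z w F theta Sig kappa mu ->
     (Nu (Bset d L z) (Uset d L K z) w u / capB d L z <= alpha ->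
        ebar_Lu d L z w u < (1 + kappa) * alpha /\
        mB_Lu d L z w u < (1 + kappa) * alpha /\
        / Bsize d L * lsum (Blist d L z)
            (fun x => indic (in_BR d L z Rr x) * F (fun y => Lu w u (padd x y)))
          < theta ((1 + kappa) * alpha) + mu) /\
     (alpha <= Nu (Bset d L z) (Uset d L K z) w u / capB d L z ->
        (1 - kappa) * alpha < ebar_Lu d L z w u /\
        (1 - kappa) * alpha < mB_Lu d L z w u /\
        theta ((1 - kappa) * alpha) - mu <
          / Bsize d L * lsum (Blist d L z) (fun x => F (fun y => Lu w u (padd x y))))) /\
  ((forall alpha beta, In alpha Sig -> In beta Sig ->
      (1 - kappa) * alpha < beta < (1 + kappa) * alpha -> beta = alpha) ->
   good_box d L K z w F theta Sig kappa mu ->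
   forall u, 0 < u ->
     let vals := Nu (Bset d L z) (Uset d L K z) w u / capB d L z
                 :: ebar_Lu d L z w u :: mB_Lu d L z w u :: nil in
     forall p q, In p vals -> In q vals ->
     forall a b c, In a Sig -> In b Sig -> In c Sig ->
       Rmin p q <= a <= Rmax p q -> Rmin p q <= b <= Rmax p q ->
       Rmin p q <= c <= Rmax p q ->
       a = b \/ b = c \/ a = c).
Proof.
  split.
  - intros u alpha _ Ha Hg. split.
    + apply (upper_estimates d Rr F cF theta Sig kappa mu L K z w); auto.
    + apply (lower_estimates d Rr F cF theta Sig kappa mu L K z w); auto.
  - intros Hsep Hg u _ vals p q Hp Hq.
    assert (Hside : forall alpha, In alpha Sig ->
              Rmax p q < (1 + kappa) * alpha \/ (1 - kappa) * alpha < Rmin p q).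
    { intros alpha Ha.
      destruct (values_one_side d Rr F cF theta Sig kappa mu L K z w HF Hkappa HL HK Hw
                  HSig_pos u alpha Ha Hg) as [H|H]; [left|right];
        [apply Rmax_case|apply Rmin_case]; apply H; auto. }
    intros a b c Ha Hb Hc Ia Ib Ic.
    apply (at_most_two_separated (fun x => In x Sig /\ Rmin p q <= x <= Rmax p q)
             kappa (Rmin p q) (Rmax p q)); auto; try lra.
    + intros x [Hx Ix]. auto.
    + intros x y [Hx _] [Hy _]. apply Hsep; auto.
Qed.
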